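(* Let $\vartheta$ be a primitive semi-compatible random substitution with PF eigenvalue $\lambda$, let $K=\max_{1\leqslant i\leqslant n}\ell_{1,i}$, and for $N\in\mathbb N$ let $I_N=\vartheta(\mathcal L)\cap\mathcal L_N$. For every $\varepsilon>0$ with $\lambda>\varepsilon nK$ there is $N_0\in\mathbb N$ such that for all $N\geqslant N_0$, \[ I_N\;\subset\;\bigcup_{m=\lceil N/(\lambda+\varepsilon nK)\rceil}^{\lfloor N/(\lambda-\varepsilon nK)\rfloor}\vartheta(\mathcal L_m). \]
   Context: Let $\mathcal A=\{a_1,\dots,a_n\}$ be a finite alphabet ($n=\#\mathcal A$), $\mathcal A^+$ the finite non-empty words over $\mathcal A$. A random substitution is a map $\vartheta$ from $\mathcal A$ to finite non-empty subsets of $\mathcal A^+$, extended to words by $\vartheta(u_1\cdots u_m)=\{w_1\cdots w_m: w_k\in\vartheta(u_k)\}$ and to sets of words by unions; powers $\vartheta^m$ are compositions. $|u|$ is the length and $|u|_a$ the number of occurrences of letter $a$ in $u$; $\Phi(u)=(|u|_{a_1},\dots,|u|_{a_n})^\intercal$. $\vartheta$ is semi-compatible if for each $a$ all words in $\vartheta(a)$ have the same $\Phi$; then all words in $\vartheta(a_i)$ have common length $\ell_{1,i}$. Substitution matrix: $M_{ij}=|u|_{a_i}$, $u\in\vartheta(a_j)$; $\vartheta$ is primitive if $M$ is primitive, with Perron–Frobenius eigenvalue $\lambda$. The language $\mathcal L$ is the set of all subwords of words in $\vartheta^m(a)$, $a\in\mathcal A$, $m\in\mathbb N$, and $\mathcal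 L_\ell=\{v\in\mathcal L:|v|=\ell\}$. *)

From Stdlib Require Import Reals.
From mathcomp Require Import all_boot.

Set Implicit Arguments.
Unset Strict Implicit.
Unset Printing Implicit Defensive.

Section RandomSubstitution.
Variable A : finType.

(* A random substitution is given by th : A -> seq (seq A); the list th a
   represents the finite set vartheta(a) of words. *)

Definition is_rsubst (th : A -> seq (seq A)) : Prop :=
  forall a, 0 < size (th a) /\ forall u, u \in th a -> 0 < size u.

Fixpoint subst_word (th : A -> seq (seq A)) (u : seq A) : seq (seq A) :=
  match u with
  | [::] => [:: [::]]
  | a :: u' => [seq x ++ y | x <- th a, y <- subst_word th u']
  end.

Fixpoint subst_iter (th : A -> seq (seq A)) (m : nat) (a : A) : seq (seq A) :=
  match m with
  | 0 => [:: [:: a]]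
  | m'.+1 => flatten [seq subst_word th w | w <- subst_iter th m' a]
  end.

Definition semi_compatible (th : A -> seq (seq A)) : Prop :=
  forall a u v, u \in th a -> v \in th a -> forall b, count_mem b u = count_mem b v.

Definition subst_mx (th : A -> seq (seq A)) (b a : A) : nat :=
  count_mem b (head [::] (th a)).

Fixpoint mx_pow (th : A -> seq (seq A)) (k : nat) (i j : A) : nat :=
  match k with
  | 0 => (i == j : nat)
  | k'.+1 => \sum_(l : A) subst_mx th i l * mx_pow th k' l j
  end.

Definition primitive_rsubst (th : A -> seq (seq A)) : Prop :=
  exists k, 0 < k /\ forall i j, 0 < mx_pow th k i j.

Definition PF_eigenvalue (th : A -> seq (seq A)) (lam : R) : Prop :=
  exists v : A -> R, (forall a, Rlt 0 (v a)) /\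
    forall i, \big[Rplus/R0]_(j : A) Rmult (INR (subst_mx th i j)) (v j) = Rmult lam (v i).

Definition in_lang (th : A -> seq (seq A)) (v : seq A) : Prop :=
  0 < size v /\ exists (a : A) (m : nat) (w : seq A), w \in subst_iter th m a /\ infix v w.

Definition Kmax (th : A -> seq (seq A)) : nat :=
  \max_(a : A) size (head [::] (th a)).

Definition in_subst_lang_len (th : A -> seq (seq A)) (m : nat) (w : seq A) : Prop :=
  exists v, in_lang th v /\ size v = m /\ w \in subst_word th v.

Definition in_I (th : A -> seq (seq A)) (N : nat) (w : seq A) : Prop :=
  (exists v, in_lang th v /\ w \in subst_word th v) /\ in_lang th w /\ size w = N.

End RandomSubstitution.

From Stdlib Require Import Reals.
From mathcomp Require Import all_boot all_order all_algebra.
From mathcomp Require Import Rstruct ring lra.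

(* Every word of ϑ(v) has length Σ_{c ∈ v} ℓ_c, so it suffices that this sum is
   λ|v| + o(|v|) uniformly over legal words v.  The letter counts of a word of
   ϑ^k(c) form the c-th column of M^k.  As M^p is strictly positive, multiplying
   by M^p shrinks the relative spread of a positive vector around the PF
   eigenvector r by a fixed factor 1 - q (Birkhoff's contraction), so for large k
   these columns are nearly proportional to r; since Σ_b ℓ_b r_b = λ Σ_b r_b,
   every word u of ϑ^k(c) then satisfies |Σ_{c ∈ u} ℓ_c - λ|u|| ≤ d|u|.
   A legal word is a factor of some ϑ^t(a), which for t ≥ k is a concatenation of
   such blocks of length at most K^k: only the two partial blocks at its ends
   escape the estimate, at a constant cost.  With d = εnK/2 and N large, that
   constant is below d|v|, whence |N - λ|v|| ≤ εnK|v|. *)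

Set Implicit Arguments.
Unset Strict Implicit.
Unset Printing Implicit Defensive.

Import Order.TTheory GRing.Theory Num.Theory.

Section Words.
Variables (A : finType) (th : A -> seq (seq A)).

Definition subst_len (c : A) : nat := size (head [::] (th c)).

Lemma sum_count_mem (F : A -> nat) (u : seq A) :
  \sum_(c <- u) F c = \sum_c count_mem c u * F c.
Proof.
elim: u => [|x u IH]; first by rewrite big_nil big1.
under [RHS]eq_bigr => c _ do rewrite /= mulnDl.
rewrite big_cons big_split /= -IH; congr (_ + _).
rewrite (bigD1 x) //= eqxx mul1n big1 ?addn0 // => c.
by rewrite eq_sym => /negPf ->.
Qed.

Lemma size_count_mem (u : seq A) : size u = \sum_c count_mem c u.
Proof. by rewrite -sum1_size sum_count_mem; apply: eq_bigr => c _; rewrite muln1. Qed.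

Lemma subst_len_colsum c : subst_len c = \sum_b subst_mx th b c.
Proof. exact: size_count_mem. Qed.

Lemma subst_len_le_Kmax c : subst_len c <= Kmax th.
Proof. exact: (leq_bigmax c). Qed.

Lemma sum_subst_len_le (u : seq A) : \sum_(c <- u) subst_len c <= Kmax th * size u.
Proof.
elim: u => [|c u IH]; first by rewrite big_nil.
by rewrite big_cons mulnS leq_add ?subst_len_le_Kmax.
Qed.

Lemma mx_powD p k i j :
  mx_pow th (p + k) i j = \sum_l mx_pow th p i l * mx_pow th k l j.
Proof.
elim: p i j => [|p IH] i j /=.
  rewrite (bigD1 i) //= eqxx mul1n big1 ?addn0 // => l.
  by rewrite eq_sym => /negPf ->.
under eq_bigr => l _ do rewrite IH big_distrr.
rewrite exchange_big /=; apply: eq_bigr => l _.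
by rewrite big_distrl; apply: eq_bigr => l' _; rewrite mulnA.
Qed.

Lemma subst_word_cat u1 u2 w : w \in subst_word th (u1 ++ u2) ->
  exists w1 w2, [/\ w = w1 ++ w2, w1 \in subst_word th u1 & w2 \in subst_word th u2].
Proof.
elim: u1 w => [|a u1 IH] w /=; first by exists [::], w; rewrite inE.
case/allpairsP => [[x y]] /= [x_a /IH [y1 [y2 [-> y1_u1 y2_u2]]] ->].
exists (x ++ y1), y2; split; rewrite ?catA //.
exact: (allpairs_f (fun x y => x ++ y)).
Qed.

Lemma subst_word_flatten bs' w : w \in subst_word th (flatten bs') ->
  exists2 bs, w = flatten bs &
    forall b, b \in bs -> exists2 b', b' \in bs' & b \in subst_word th b'.
Proof.
elim: bs' w => [|b' bs' IH] w /=; first by rewrite inE => /eqP ->; exists [::].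
case/subst_word_cat => [w1 [w2 [-> w1_b' /IH [bs -> bs_bs']]]].
exists (w1 :: bs) => // b; rewrite inE => /predU1P [-> | /bs_bs' [b'' b''_bs' b_b'']].
  by exists b'; rewrite ?mem_head.
by exists b''; rewrite // inE b''_bs' orbT.
Qed.

Lemma subst_iter_blocks t k a w : w \in subst_iter th (t + k) a ->
  exists2 bs, w = flatten bs & forall b, b \in bs -> exists c, b \in subst_iter th k c.
Proof.
elim: k w => [|k IH] w.
  rewrite addn0 => _; exists [seq [:: c] | c <- w]; first by elim: w => //= c w <-.
  by move=> _ /mapP [c _ ->]; exists c; rewrite mem_head.
rewrite addnS => /flatten_mapP [w' /IH [bs' -> bs'_k] /subst_word_flatten [bs -> bs_bs']].
exists bs => // b /bs_bs' [b' /bs'_k [c b'_c] b_b'].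
by exists c; apply/flatten_mapP; exists b'.
Qed.

Hypotheses (th_rs : is_rsubst th) (th_sc : semi_compatible th).

Lemma head_subst_mem c : head [::] (th c) \in th c.
Proof. by case: (th_rs c); case: (th c) => //= x s _ _; rewrite mem_head. Qed.

Lemma subst_len_gt0 c : 0 < subst_len c.
Proof. by case: (th_rs c) => _; apply; apply: head_subst_mem. Qed.

Lemma Kmax_gt0 (a : A) : 0 < Kmax th.
Proof. exact: leq_trans (subst_len_gt0 a) (subst_len_le_Kmax a). Qed.

Lemma count_mem_subst c x b : x \in th c -> count_mem b x = subst_mx th b c.
Proof. by move=> x_c; apply: th_sc x_c (head_subst_mem c) b. Qed.

Lemma size_subst c x : x \in th c -> size x = subst_len c.
Proof.
move=> x_c; rewrite subst_len_colsum size_count_mem.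
by apply: eq_bigr => b _; apply: count_mem_subst.
Qed.

Lemma count_mem_subst_word u w b : w \in subst_word th u ->
  count_mem b w = \sum_(c <- u) subst_mx th b c.
Proof.
elim: u w => [|a u IH] w /=; first by rewrite inE big_nil => /eqP ->.
case/allpairsP => [[x y]] /= [x_a /IH y_u ->].
by rewrite count_cat big_cons (count_mem_subst b x_a) y_u.
Qed.

Lemma size_subst_word u w : w \in subst_word th u -> size w = \sum_(c <- u) subst_len c.
Proof.
elim: u w => [|a u IH] w /=; first by rewrite inE big_nil => /eqP ->.
case/allpairsP => [[x y]] /= [x_a /IH y_u ->].
by rewrite size_cat big_cons (size_subst x_a) y_u.
Qed.

Lemma count_mem_subst_iter k a w b : w \in subst_iter th k a ->
  count_mem b w = mx_pow th k b a.
Proof.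
elim: k a w b => [|k IH] a w b /=; first by rewrite inE => /eqP -> /=; rewrite eq_sym addn0.
case/flatten_mapP => w' w'_k w_w'.
rewrite (count_mem_subst_word b w_w') sum_count_mem; apply: eq_bigr => c _.
by rewrite (IH _ _ _ w'_k) mulnC.
Qed.

Lemma size_subst_iter_le k a w : w \in subst_iter th k a -> size w <= Kmax th ^ k.
Proof.
elim: k a w => [|k IH] a w /=; first by rewrite inE => /eqP ->.
case/flatten_mapP => w' w'_k w_w'.
rewrite (size_subst_word w_w') expnSr; apply: leq_trans (sum_subst_len_le _) _.
by rewrite mulnC leq_mul2r (IH _ _ w'_k) orbT.
Qed.

End Words.

Lemma cat_eq_catl (T : Type) (x y u v : seq T) :
  x ++ y = u ++ v -> size x <= size u -> exists2 z, u = x ++ z & y = z ++ v.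
Proof.
elim: x u => [|a x IH] [|b u] //=; first by move=> -> _; exists [::].
  by move=> -> _; exists (b :: u).
by case=> -> /IH e /e [z -> ->]; exists z.
Qed.

Local Open Scope ring_scope.

Section AdditiveBounds.
Variables (R : realFieldType) (T : Type) (E : seq T -> R).
Hypothesis E_cat : forall u v, E (u ++ v) = E u + E v.

Lemma E_nil : E [::] = 0.
Proof. by have /= := E_cat [::] [::]; lra. Qed.

Lemma ler_norm_cat u v a b : `|E u| <= a -> `|E v| <= b -> `|E (u ++ v)| <= a + b.
Proof. by move=> Eu Ev; rewrite E_cat; apply: le_trans (ler_normD _ _) (lerD Eu Ev). Qed.

Variables (C d : R) (B : nat).
Hypothesis E_le : forall u, `|E u| <= C * (size u)%:R.
Hypotheses (C_ge0 : 0 <= C) (d_ge0 : 0 <= d).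

Definition good_block (b : seq T) := (`|E b| <= d * (size b)%:R) && (size b <= B)%N.

Lemma norm_E_short u : (size u <= B)%N -> `|E u| <= d * (size u)%:R + C * B%:R.
Proof.
move=> uB; apply: le_trans (E_le u) _.
have : C * (size u)%:R <= C * B%:R by rewrite ler_wpM2l // ler_nat.
have : 0 <= d * (size u)%:R by rewrite mulr_ge0.
lra.
Qed.

Lemma norm_E_prefix bs u z : all good_block bs -> flatten bs = u ++ z ->
  `|E u| <= d * (size u)%:R + C * B%:R.
Proof.
elim: bs u => [|b bs IH] u /=.
  by case: u => // _ _; rewrite E_nil normr0 mulr0 add0r mulr_ge0.
case/andP => /andP [Eb bB] bs_good e.
have [ub | bu] := leqP (size u) (size b).
  by apply: norm_E_short; apply: leq_trans ub bB.
have [u' -> e'] := cat_eq_catl e (ltnW bu).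
have := ler_norm_cat Eb (IH u' bs_good e').
by rewrite size_cat natrD; lra.
Qed.

Lemma norm_E_infix bs x v y : all good_block bs -> flatten bs = x ++ v ++ y ->
  `|E v| <= d * (size v)%:R + 2 * (C * B%:R).
Proof.
have CB_ge0 : 0 <= C * B%:R by rewrite mulr_ge0.
elim: bs x => [|b bs IH] x /=.
  by case: x => //; case: v => // _ _; rewrite E_nil normr0 mulr0 add0r mulr_ge0.
case/andP => /andP [Eb bB] bs_good e.
have [bx | xb] := leqP (size b) (size x).
  by have [x' _ e'] := cat_eq_catl e bx; apply: IH e'.
have [s b_xs e'] := cat_eq_catl (esym e) (ltnW xb).
have sB : (size s <= B)%N by apply: leq_trans bB; rewrite b_xs size_cat leq_addl.
have [vs | sv] := leqP (size v) (size s).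
  by have := norm_E_short (leq_trans vs sB); lra.
have [p v_sp e''] := cat_eq_catl (esym e') (ltnW sv).
have Es : `|E s| <= C * B%:R by apply: le_trans (E_le s) _; rewrite ler_wpM2l // ler_nat.
have := ler_norm_cat Es (norm_E_prefix bs_good e'').
have : 0 <= d * (size s)%:R by rewrite mulr_ge0.
by rewrite v_sp size_cat natrD; lra.
Qed.

End AdditiveBounds.

Section Pinching.
Variables (R : realFieldType) (A : finType) (th : A -> seq (seq A)).
Variables (lam : R) (r : A -> R).
Hypothesis r_gt0 : forall a, 0 < r a.
Hypothesis r_eigen : forall i, \sum_j (subst_mx th i j)%:R * r j = lam * r i.

Lemma mx_pow_eigen k i : \sum_j (mx_pow th k i j)%:R * r j = lam ^+ k * r i.
Proof.
elim: k i => [|k IH] i /=.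
  rewrite (bigD1 i) //= eqxx !mul1r big1 ?addr0 // => j.
  by rewrite eq_sym => /negPf ->; rewrite mul0r.
under eq_bigr => j _ do rewrite natr_sum mulr_suml.
rewrite exchange_big exprS -mulrA mulrCA -r_eigen mulr_sumr /=; apply: eq_bigr => l _.
by rewrite mulrCA -IH mulr_sumr; apply: eq_bigr => j _; rewrite natrM mulrA.
Qed.

Definition col k c i : R := (mx_pow th k i c)%:R.

Lemma col_mx_powD p k c i : col (p + k) c i = \sum_j (mx_pow th p i j)%:R * col k c j.
Proof. by rewrite /col mx_powD natr_sum; apply: eq_bigr => j _; rewrite natrM. Qed.

(* x lies between G r and F r with F <= (1 + D) G, i.e. D bounds
   exp (Hilbert projective distance from x to r) - 1. *)
Definition pinched (x : A -> R) (D : R) : Prop :=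
  exists G F, [/\ 0 < G, forall j, G * r j <= x j <= F * r j & F - G <= D * G].

Lemma pinched_ge0 (j0 : A) x D : pinched x D -> 0 <= D.
Proof.
case=> G [F [G_gt0 /(_ j0) /andP [x_ge x_le] gap]].
have : G <= F by rewrite -(ler_pM2r (r_gt0 j0)) (le_trans x_ge x_le).
by rewrite -(pmulr_lge0 D G_gt0); lra.
Qed.

Lemma pinched_le x D D' : D <= D' -> pinched x D -> pinched x D'.
Proof.
move=> le_DD' [G [F [G_gt0 x_bd gap]]]; exists G, F; split => //.
by apply: le_trans gap _; rewrite ler_pM2r.
Qed.

Lemma gt0_pinched x : (forall j, 0 < x j) -> exists D, pinched x D.
Proof.
move=> x_gt0; pose G := \big[Order.min/1]_j (x j / r j).
pose F := \big[Order.max/G]_j (x j / r j).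
have G_gt0 : 0 < G by apply: lt_bigmin => // j _; rewrite divr_gt0.
exists ((F - G) / G), G, F; split; rewrite ?divfK ?gt_eqF //.
move=> j; rewrite -(ler_pdivlMr _ _ (r_gt0 j)) -(ler_pdivrMr _ _ (r_gt0 j)).
by rewrite bigmin_le le_bigmax.
Qed.

Section Contraction.
Variables (p : nat) (q : R).
Hypotheses (lam_gt0 : 0 < lam) (q_gt0 : 0 < q) (q_le1 : q <= 1).
(* Each term of the row sum Σ_j M^p_ij r_j = λ^p r_i is at least the fraction q of it. *)
Hypothesis mx_pow_ge : forall i j, q * lam ^+ p * r i <= (mx_pow th p i j)%:R * r j.

Lemma mx_pow_mul_ge j0 (y : A -> R) i : (forall j, 0 <= y j) ->
  q * lam ^+ p * r i * (y j0 / r j0) <= \sum_j (mx_pow th p i j)%:R * y j.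
Proof.
move=> y_ge0.
apply: (@le_trans _ _ ((mx_pow th p i j0)%:R * r j0 * (y j0 / r j0))).
  by apply: ler_wpM2r; [exact: divr_ge0 (y_ge0 j0) (ltW (r_gt0 j0)) | exact: mx_pow_ge].
rewrite -mulrA [r j0 * _]mulrC divfK ?lt0r_neq0 //.
by rewrite (bigD1 j0) //= lerDl sumr_ge0 // => j _; rewrite mulr_ge0.
Qed.

Lemma mx_pow_mul_bounds (x : A -> R) G F j0 i :
  (forall j, G * r j <= x j <= F * r j) ->
  lam ^+ p * (G + q * (x j0 / r j0 - G)) * r i <= \sum_j (mx_pow th p i j)%:R * x j
    <= lam ^+ p * (F - q * (F - x j0 / r j0)) * r i.
Proof.
move=> x_bd.
have x_lo j : 0 <= x j - G * r j by rewrite subr_ge0; case/andP: (x_bd j).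
have x_hi j : 0 <= F * r j - x j by rewrite subr_ge0; case/andP: (x_bd j).
have := mx_pow_mul_ge j0 i x_lo; have := mx_pow_mul_ge j0 i x_hi.
have -> : \sum_j (mx_pow th p i j)%:R * (x j - G * r j) =
    \sum_j (mx_pow th p i j)%:R * x j - G * (lam ^+ p * r i).
  by rewrite -mx_pow_eigen mulr_sumr -sumrB; apply: eq_bigr => j _; ring.
have -> : \sum_j (mx_pow th p i j)%:R * (F * r j - x j) =
    F * (lam ^+ p * r i) - \sum_j (mx_pow th p i j)%:R * x j.
  by rewrite -mx_pow_eigen mulr_sumr -sumrB; apply: eq_bigr => j _; ring.
have -> : (x j0 - G * r j0) / r j0 = x j0 / r j0 - G by field; rewrite gt_eqF.
have -> : (F * r j0 - x j0) / r j0 = F - x j0 / r j0 by field; rewrite gt_eqF.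
by move=> hi lo; apply/andP; split; nra.
Qed.

Lemma pinched_col_contract k c D :
  pinched (col k c) D -> pinched (col (p + k) c) ((1 - q) * D).
Proof.
move=> pin; have D_ge0 := pinched_ge0 c pin.
case: pin => G [F [G_gt0 x_bd gap]].
pose t := col k c c / r c.
have Gt : G <= t by rewrite /t ler_pdivlMr //; case/andP: (x_bd c).
have lamp_gt0 : 0 < lam ^+ p := exprn_gt0 p lam_gt0.
have q1_ge0 : 0 <= 1 - q by rewrite subr_ge0.
pose G' := lam ^+ p * (G + q * (t - G)).
have G_le : lam ^+ p * G <= G'.
  by rewrite ler_wpM2l ?(ltW lamp_gt0) // lerDl mulr_ge0 ?subr_ge0 // ltW.
exists G', (lam ^+ p * (F - q * (F - t))); split.
- exact: lt_le_trans (mulr_gt0 lamp_gt0 G_gt0) G_le.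
- by move=> i; rewrite col_mx_powD; apply: mx_pow_mul_bounds.
have gap' : lam ^+ p * (F - q * (F - t)) - G' = lam ^+ p * (1 - q) * (F - G).
  by rewrite /G'; ring.
have m1 : lam ^+ p * (1 - q) * (F - G) <= lam ^+ p * (1 - q) * (D * G).
  by rewrite ler_wpM2l // mulr_ge0 // ltW.
have m2 : (1 - q) * D * (lam ^+ p * G) <= (1 - q) * D * G' by rewrite ler_wpM2l ?mulr_ge0.
by rewrite gap'; lra.
Qed.

Lemma pinched_col_iter k c D j :
  pinched (col k c) D -> pinched (col (j * p + k) c) ((1 - q) ^+ j * D).
Proof.
move=> pin; elim: j => [|j IH]; first by rewrite mul0n expr0 mul1r.
by rewrite mulSn -addnA exprS -mulrA; apply: pinched_col_contract.
Qed.

End Contraction.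

Lemma subst_len_eigen : \sum_b (subst_len th b)%:R * r b = lam * \sum_i r i.
Proof.
under eq_bigr => b _ do rewrite subst_len_colsum natr_sum mulr_suml.
by rewrite exchange_big mulr_sumr; apply: eq_bigr => i _; apply: r_eigen.
Qed.

Lemma pinched_len_gap y D : 0 <= lam -> 0 <= D -> pinched y D ->
  `|\sum_b y b * (subst_len th b)%:R - lam * \sum_b y b| <= lam * D * \sum_b y b.
Proof.
move=> lam_ge0 D_ge0 [G [F [G_gt0 y_bd gap]]].
have S_ge0 : 0 <= \sum_i r i by rewrite sumr_ge0 // => i _; rewrite ltW.
have len_ge0 b : 0 <= (subst_len th b)%:R :> R by [].
have [L_lo L_hi] : G * (lam * \sum_i r i) <= \sum_b y b * (subst_len th b)%:R
                   /\ \sum_b y b * (subst_len th b)%:R <= F * (lam * \sum_i r i).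
  rewrite -subst_len_eigen !mulr_sumr; split; apply: ler_sum => b _;
    rewrite mulrCA [y b * _]mulrC ler_wpM2l //; by case/andP: (y_bd b).
have [s_lo s_hi] : G * \sum_i r i <= \sum_b y b /\ \sum_b y b <= F * \sum_i r i.
  by rewrite !mulr_sumr; split; apply: ler_sum => b _; case/andP: (y_bd b).
have m1 : lam * (\sum_i r i) * (F - G) <= lam * (\sum_i r i) * (D * G).
  by rewrite ler_wpM2l ?mulr_ge0.
have m2 : lam * D * (G * \sum_i r i) <= lam * D * \sum_b y b.
  by rewrite ler_wpM2l ?mulr_ge0.
rewrite ler_norml; apply/andP; split; nra.
Qed.

End Pinching.

Lemma bernoulli_1B (R : realFieldType) (q : R) j :
  0 <= q -> q <= 1 -> (1 - q) ^+ j * (1 + j%:R * q) <= 1.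
Proof.
move=> q_ge0 q_le1; elim: j => [|j IH]; first by rewrite expr0 mul0r addr0 mul1r.
apply: le_trans IH; rewrite exprSr -mulrA ler_wpM2l ?exprn_ge0 ?subr_ge0 //.
have : 0 <= j%:R * (q * q) by rewrite !mulr_ge0.
by rewrite -natr1; nra.
Qed.

Lemma geometric_le (R : archiRealFieldType) (q X Y : R) :
  0 < q -> q <= 1 -> 0 < Y -> exists j, (1 - q) ^+ j * X <= Y.
Proof.
move=> q_gt0 q_le1 Y_gt0; pose j := Num.Def.archi_bound (`|X| / (Y * q)).
have qY_gt0 : 0 < Y * q by rewrite mulr_gt0.
have : `|X| < j%:R * (Y * q).
  by rewrite -ltr_pdivrMr // archi_boundP // divr_ge0 // ltW.
have := bernoulli_1B j (ltW q_gt0) q_le1.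
have : 0 <= (1 - q) ^+ j by rewrite exprn_ge0 // subr_ge0.
have := ler_norm X.
exists j; nra.
Qed.

Lemma div_bounds_of_norm_le (R : realFieldType) (N m lam delta : R) :
  0 <= delta < lam -> `|N - lam * m| <= delta * m ->
  N / (lam + delta) <= m <= N / (lam - delta).
Proof.
case/andP => delta_ge0 delta_lt /ler_normlP [lo hi].
by rewrite ler_pdivrMr ?ler_pdivlMr; [apply/andP; split|..]; lra.
Qed.

Section Discrepancy.
Variables (R : archiRealFieldType) (A : finType) (th : A -> seq (seq A)).
Hypotheses (th_rs : is_rsubst th) (th_sc : semi_compatible th).
Variables (lam : R) (r : A -> R).
Hypotheses (lam_gt0 : 0 < lam) (r_gt0 : forall a, 0 < r a).
Hypothesis r_eigen : forall i, \sum_j (subst_mx th i j)%:R * r j = lam * r i.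
Variable p : nat.
Hypothesis mx_pow_gt0 : forall i j, (0 < mx_pow th p i j)%N.

(* By semi-compatibility this is |w| - λ|v| for every w in ϑ(v). *)
Definition discrepancy (v : seq A) : R :=
  (\sum_(c <- v) subst_len th c)%:R - lam * (size v)%:R.

Lemma discrepancy_cat u v : discrepancy (u ++ v) = discrepancy u + discrepancy v.
Proof. by rewrite /discrepancy big_cat size_cat !natrD; ring. Qed.

Lemma norm_discrepancy_le u : `|discrepancy u| <= ((Kmax th)%:R + lam) * (size u)%:R.
Proof.
apply: le_trans (ler_normB _ _) _.
rewrite ger0_norm // ger0_norm ?mulr_ge0 ?(ltW lam_gt0) // mulrDl lerD // -natrM ler_nat.
exact: sum_subst_len_le.
Qed.

Lemma norm_discrepancy_block k c D w : pinched r (col R th k c) D ->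
  w \in subst_iter th k c -> `|discrepancy w| <= lam * D * (size w)%:R.
Proof.
move=> pin w_c; rewrite /discrepancy.
have -> : (size w)%:R = \sum_b col R th k c b.
  rewrite size_count_mem natr_sum; apply: eq_bigr => b _.
  by rewrite (count_mem_subst_iter th_rs th_sc b w_c).
rewrite sum_count_mem natr_sum.
under eq_bigr => b _ do rewrite natrM (count_mem_subst_iter th_rs th_sc b w_c).
exact: pinched_len_gap r_gt0 r_eigen _ _ (ltW lam_gt0) (pinched_ge0 r_gt0 c pin) pin.
Qed.

Lemma contraction_factor : exists2 q : R, 0 < q <= 1 &
  forall i j, q * lam ^+ p * r i <= (mx_pow th p i j)%:R * r j.
Proof.
pose f (ij : A * A) := (mx_pow th p ij.1 ij.2)%:R * r ij.2 / (lam ^+ p * r ij.1).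
exists (\big[Order.min/1]_ij f ij).
  rewrite bigmin_le_id andbT; apply: lt_bigmin => // -[i j] _.
  by rewrite divr_gt0 ?mulr_gt0 ?exprn_gt0 ?ltr0n.
move=> i j; rewrite -mulrA -ler_pdivlMr ?mulr_gt0 ?exprn_gt0 //.
exact: (bigmin_le _ (i, j)).
Qed.

Lemma pinched_mx_pow_cols : exists D, forall c, pinched r (col R th p c) D.
Proof.
have /fin_all_exists [D pin] : forall c, exists D, pinched r (col R th p c) D.
  by move=> c; apply: gt0_pinched => // i; rewrite ltr0n.
by exists (\big[Order.max/0]_c D c) => c; apply: pinched_le (pin c); apply: le_bigmax.
Qed.

Lemma balanced_blocks d : 0 < d -> exists k, forall c w,
  w \in subst_iter th k c -> `|discrepancy w| <= d * (size w)%:R.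
Proof.
move=> d_gt0.
have [q /andP [q_gt0 q_le1] mx_pow_ge] := contraction_factor.
have [D pin] := pinched_mx_pow_cols.
have [j decay] := geometric_le (lam * D) q_gt0 q_le1 d_gt0.
exists (j * p + p) => c w w_c.
have pin_k := pinched_col_iter r_gt0 r_eigen lam_gt0 q_gt0 q_le1 mx_pow_ge j (pin c).
apply: le_trans (norm_discrepancy_block pin_k w_c) _.
by rewrite ler_wpM2r // mulrCA.
Qed.

Lemma legal_discrepancy d : 0 < d -> exists C, forall v, in_lang th v ->
  `|discrepancy v| <= d * (size v)%:R + C.
Proof.
move=> d_gt0; have [k blocks] := balanced_blocks d_gt0.
pose C0 := (Kmax th)%:R + lam.
have C0_ge0 : 0 <= C0 by rewrite addr_ge0 ?ler0n ?ltW.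
exists (2 * (C0 * (Kmax th ^ k)%:R)) => v [_ [a [t [w [w_t /infixP [x [y w_xvy]]]]]]].
have [kt | tk] := leqP k t.
  rewrite -(subnK kt) in w_t; have [bs w_bs bs_blocks] := subst_iter_blocks w_t.
  apply: (norm_E_infix discrepancy_cat norm_discrepancy_le C0_ge0 (ltW d_gt0)
            (bs := bs) (x := x) (y := y)); last by rewrite -w_bs.
  apply/allP => b /bs_blocks [c b_c].
  by rewrite /good_block (blocks c) // (size_subst_iter_le th_rs th_sc b_c).
have v_le : (size v <= Kmax th ^ k)%N.
  apply: (@leq_trans (size w)); first by rewrite w_xvy !size_cat addnCA leq_addr.
  exact: leq_trans (size_subst_iter_le th_rs th_sc w_t) (leq_pexp2l (Kmax_gt0 th_rs a) (ltnW tk)).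
have := norm_E_short norm_discrepancy_le C0_ge0 (ltW d_gt0) v_le.
have : 0 <= C0 * (Kmax th ^ k)%:R by rewrite mulr_ge0.
by rewrite /C0; lra.
Qed.

Lemma preimage_size_bounds delta : 0 < delta < lam -> exists N0, forall N v w,
  (N0 <= N)%N -> in_lang th v -> w \in subst_word th v -> size w = N ->
  N%:R / (lam + delta) <= (size v)%:R <= N%:R / (lam - delta).
Proof.
case/andP => delta_gt0 delta_lt; have d_gt0 : 0 < delta / 2 by rewrite divr_gt0.
have [C disc_le] := legal_discrepancy d_gt0.
exists (Num.Def.archi_bound ((Kmax th)%:R * `|C| / (delta / 2))).
move=> N v w N0_le v_legal w_v w_N.
have N_def : N = \sum_(c <- v) subst_len th c by rewrite -w_N (size_subst_word th_rs th_sc w_v).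
have K_gt0 : 0 < (Kmax th)%:R :> R.
  by case: v_legal => _ [a _]; rewrite ltr0n (Kmax_gt0 th_rs a).
have C_le : `|C| <= delta / 2 * (size v)%:R.
  have : (Kmax th)%:R * `|C| / (delta / 2) < (Kmax th)%:R * (size v)%:R.
    apply: lt_le_trans (archi_boundP _) _.
      exact: divr_ge0 (mulr_ge0 (ler0n _ _) (normr_ge0 _)) (ltW d_gt0).
    by rewrite -natrM ler_nat (leq_trans N0_le) // N_def sum_subst_len_le.
  by rewrite ltr_pdivrMr // => ?; nra.
apply: div_bounds_of_norm_le; first by rewrite ltW.
have := disc_le v v_legal; rewrite /discrepancy -N_def.
have := ler_norm C; lra.
Qed.

End Discrepancy.

Lemma PF_eigenvalueP (A : finType) (th : A -> seq (seq A)) (lam : R) :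
  PF_eigenvalue th lam -> exists2 r : A -> R, forall a, 0 < r a &
    forall i, \sum_j (subst_mx th i j)%:R * r j = lam * r i.
Proof.
case=> r [r_gt0 r_eigen]; exists r => [a | i]; first exact/RltP.
by rewrite -RmultE -r_eigen; apply: eq_bigr => j _; rewrite INRE.
Qed.

Local Close Scope ring_scope.

Theorem mainTheorem5 (A : finType) (th : A -> seq (seq A)) (lam eps : R) :
  is_rsubst th -> semi_compatible th -> primitive_rsubst th -> PF_eigenvalue th lam ->
  Rlt 0 eps -> Rlt (Rmult (Rmult eps (INR #|A|)) (INR (Kmax th))) lam ->
  exists N0 : nat, forall N : nat, N0 <= N ->
    forall w : seq A, in_I th N w ->
      exists m : nat,
        Rle (Rdiv (INR N) (Rplus lam (Rmult (Rmult eps (INR #|A|)) (INR (Kmax th))))) (INR m) /\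
        Rle (INR m) (Rdiv (INR N) (Rminus lam (Rmult (Rmult eps (INR #|A|)) (INR (Kmax th))))) /\
        in_subst_lang_len th m w.
Proof.
move=> th_rs th_sc [p [_ mx_pow_gt0]] /PF_eigenvalueP [r r_gt0 r_eigen] /RltP eps_gt0.
rewrite !RmultE !INRE => /RltP delta_lt_lam.
have [a0 _ | A0] := pickP (@predT A); last by exists 0 => N _ w [_ [[_ [a _]] _]]; have := A0 a.
have delta_gt0 : (0 < eps * #|A|%:R * (Kmax th)%:R)%R.
  rewrite !mulr_gt0 // ltr0n; first by apply/card_gt0P; exists a0.
  exact: Kmax_gt0 th_rs a0.
have lam_gt0 := lt_trans delta_gt0 delta_lt_lam.
have delta_bd : (0 < eps * #|A|%:R * (Kmax th)%:R < lam)%R by rewrite delta_gt0.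
have [N0 bounds] :=
  preimage_size_bounds th_rs th_sc lam_gt0 r_gt0 r_eigen mx_pow_gt0 delta_bd.
exists N0 => N N0_le w [[v [v_legal w_v]] [_ w_N]].
have /andP [lo hi] := bounds N v w N0_le v_legal w_v w_N.
exists (size v); rewrite !RdivE RplusE RminusE !INRE.
by split; [apply/RleP | split; [apply/RleP | exists v]].
Qed.
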